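(* Consider the multicast coalitional game with player set $\mathcal{N}=\{1,\ldots,N\}$, $N\ge2$, and value function $$v(S)=\sum_{i\in S}U_i-\sum_{i\in S}\frac{\alpha_i}{R_S}-\frac{\beta+\gamma}{R_S},\qquad R_S=\min_{i\in S}R_i,$$ for nonempty $S\subseteq\mathcal{N}$. Suppose $P_{Rx,i}=P_{Rx}$ for all $i$, so that $\alpha_i=\alpha:=aP_{Rx}X$ for all $i$. Let $R_k=\min_iR_i$ and $R_m=\max_iR_i$, and write $R_m=\mu R_k$ with $\mu\ge1$. If $$\mu>1+\frac{\beta+\gamma}{\alpha},$$ then the core is empty.
   Context: A transmitter multicasts a file of size $X>0$ bits to users $\mathcal{N}=\{1,\dots,N\}$. User $i$ has valuation $U_i\in\mathbb{R}$, downloads at rate $R_i>0$, and consumes receive power $P_{Rx,i}>0$; the transmitter transmits at power $P_{Tx}>0$. Costs per unit energy are $a>0$ at users and $b>0$ at the transmitter; bandwidth cost per second is $w>0$. Set $\alpha_i=aP_{Rx,i}X$, $\beta=bP_{Tx}X$, $\gamma=wX$. The core is the set of payoff vectors $(x_1,\dots,x_N)\in\mathbb{R}^N$ with $\sum_{i\in\mathcal{N}}x_i=v(\mathcal{N})$ and $\sum_{i\in S}x_i\ge v(S)$ for every nonempty $S\subseteq\mathcal{N}$. *)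

From mathcomp Require Import all_boot all_order all_algebra.
Set Implicit Arguments. Unset Strict Implicit. Unset Printing Implicit Defensive.
Import Order.TTheory GRing.Theory Num.Theory.
Local Open Scope ring_scope.

(* Minimum / maximum of rates over a set of users; only meaningful for
   nonempty S (returns 0 on the empty set, which is never used). *)
Definition rate_min (R : realFieldType) (N : nat) (Rr : 'I_N -> R) (S : {set 'I_N}) : R :=
  if [pick i in S] is Some i0 then \big[Num.min/Rr i0]_(i in S) Rr i else 0.

Definition rate_max (R : realFieldType) (N : nat) (Rr : 'I_N -> R) (S : {set 'I_N}) : R :=
  if [pick i in S] is Some i0 then \big[Num.max/Rr i0]_(i in S) Rr i else 0.

Definition mc_value (R : realFieldType) (N : nat) (U Rr alpha : 'I_N -> R)
  (beta gamma : R) (S : {set 'I_N}) : R :=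
  \sum_(i in S) U i - \sum_(i in S) alpha i / rate_min Rr S
  - (beta + gamma) / rate_min Rr S.

Definition in_core (R : realFieldType) (N : nat) (v : {set 'I_N} -> R) (x : 'I_N -> R) : Prop :=
  \sum_(i < N) x i = v setT /\
  (forall S : {set 'I_N}, S != set0 -> v S <= \sum_(i in S) x i).

(* Let m be a user of maximal rate R_m and k <> m one of minimal rate R_k
   (they differ as soon as mu > 1).  A core allocation gives {m} at least
   v({m}) and its complement, which still contains k and so still runs at
   rate R_k, at least v(N \ {m}); hence v({m}) + v(N \ {m}) <= v(N).  All
   terms cancel except the costs charged to m: alone it pays
   (alpha + beta + gamma)/R_m, inside N only alpha/R_k.  So
   alpha/R_k <= (alpha + beta + gamma)/R_m, i.e. mu <= 1 + (beta + gamma)/alpha. *)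
From mathcomp Require Import all_boot all_order all_algebra.
From mathcomp Require Import ring lra.
Set Implicit Arguments. Unset Strict Implicit. Unset Printing Implicit Defensive.
Import Order.TTheory GRing.Theory Num.Theory.
Local Open Scope ring_scope.

Section Rates.

Variables (R : realFieldType) (N : nat) (Rr : 'I_N -> R).

Lemma rate_minP (S : {set 'I_N}) :
  S != set0 -> exists2 i, i \in S & rate_min Rr S = Rr i.
Proof.
rewrite /rate_min; case: pickP => [i0 i0S _ | S0]; last first.
  by case/set0Pn => i; rewrite S0.
apply: (big_ind (fun y => exists2 i, i \in S & y = Rr i)).
- by exists i0.
- move=> _ _ [i iS ->] [j jS ->].
  by rewrite /Num.min; case: ifP; [exists i | exists j].
- by move=> i iS; exists i.
Qed.

Lemma rate_min_le (S : {set 'I_N}) j : j \in S -> rate_min Rr S <= Rr j.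
Proof.
move=> jS; rewrite /rate_min; case: pickP => [i0 _ | S0]; last by rewrite S0 in jS.
by rewrite (bigD1 j) //= ge_min lexx.
Qed.

Lemma rate_maxP (S : {set 'I_N}) :
  S != set0 -> exists2 i, i \in S & rate_max Rr S = Rr i.
Proof.
rewrite /rate_max; case: pickP => [i0 i0S _ | S0]; last first.
  by case/set0Pn => i; rewrite S0.
apply: (big_ind (fun y => exists2 i, i \in S & y = Rr i)).
- by exists i0.
- move=> _ _ [i iS ->] [j jS ->].
  by rewrite /Num.max; case: ifP; [exists j | exists i].
- by move=> i iS; exists i.
Qed.

Lemma rate_min_eq (S : {set 'I_N}) i :
  i \in S -> (forall j, j \in S -> Rr i <= Rr j) -> rate_min Rr S = Rr i.
Proof.
move=> iS imin; have [|j jS minE] := rate_minP (S := S).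
  by apply/set0Pn; exists i.
by apply/le_anti; rewrite rate_min_le // minE imin.
Qed.

Lemma rate_min_set1 m : rate_min Rr [set m] = Rr m.
Proof. by apply: rate_min_eq => [|j /set1P ->]; rewrite ?set11. Qed.

End Rates.

Lemma sum_setT_setC (V : nmodType) (T : finType) (F : T -> V) (A : {set T}) :
  \sum_(i in [set: T]) F i = \sum_(i in A) F i + \sum_(i in ~: A) F i.
Proof. by rewrite (big_setID A) setTI setTD. Qed.

Lemma in_core_superadditive (R : realFieldType) (N : nat)
    (v : {set 'I_N} -> R) x (S : {set 'I_N}) :
  in_core v x -> S != set0 -> ~: S != set0 -> v S + v (~: S) <= v setT.
Proof.
move=> [sumE coreP] S0 SC0.
have -> : v setT = \sum_(i in setT) x i.
  by rewrite -sumE; apply: eq_bigl => i; rewrite inE.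
by rewrite (sum_setT_setC _ S) lerD ?coreP.
Qed.

Section MulticastGame.

Variables (R : realFieldType) (N : nat) (U Rr alpha : 'I_N -> R) (beta gamma : R).

Let v := mc_value U Rr alpha beta gamma.

Lemma mc_value_setT_split (S : {set 'I_N}) :
  rate_min Rr S = rate_min Rr setT ->
  v setT = v S + \sum_(i in ~: S) U i - \sum_(i in ~: S) alpha i / rate_min Rr S.
Proof.
move=> minS; rewrite /v /mc_value minS.
by rewrite !(sum_setT_setC _ S); lra.
Qed.

Lemma mc_core_rate_bound x k m :
  in_core v x -> k != m -> (forall j, Rr k <= Rr j) ->
  alpha m / Rr k <= (alpha m + (beta + gamma)) / Rr m.
Proof.
move=> core km kmin.
have minT : rate_min Rr setT = Rr k by apply: rate_min_eq.
have minC : rate_min Rr (~: [set m]) = Rr k.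
  by apply: rate_min_eq => //; rewrite !inE.
have C0 : ~: [set m] != set0 by apply/set0Pn; exists k; rewrite !inE.
have := in_core_superadditive core C0; rewrite setCK.
have -> : v setT = v (~: [set m]) + U m - alpha m / Rr k.
  by rewrite (mc_value_setT_split (S := ~: [set m])) ?minC ?minT // setCK !big_set1.
have m0 : [set m] != set0 by apply/set0Pn; exists m; rewrite set11.
rewrite /v /mc_value rate_min_set1 !big_set1 minC mulrDl => /(_ m0).
lra.
Qed.

End MulticastGame.

Theorem theorem6 (R : realFieldType) (N : nat) (hN : (2 <= N)%N)
  (U Rr PRx : 'I_N -> R) (PTx a b w X P : R)
  (hX : 0 < X) (hR : forall i, 0 < Rr i) (hPRx : forall i, 0 < PRx i)
  (hPTx : 0 < PTx) (ha : 0 < a) (hb : 0 < b) (hw : 0 < w)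
  (hconst : forall i, PRx i = P) :
  let alpha_i := fun i => a * PRx i * X in
  let alpha := a * P * X in
  let beta := b * PTx * X in
  let gamma := w * X in
  let Rk := rate_min Rr setT in
  let Rm := rate_max Rr setT in
  let mu := Rm / Rk in
  mu > 1 + (beta + gamma) / alpha ->
  forall x : 'I_N -> R, ~ in_core (mc_value U Rr alpha_i beta gamma) x.
Proof.
move=> alpha_i alpha beta gamma Rk Rm mu mu_gt x core.
have T0 : [set: 'I_N] != set0 by apply/set0Pn; exists (Ordinal hN).
have [k _ RkE] := rate_minP Rr T0; have [m _ RmE] := rate_maxP Rr T0.
have kmin j : Rr k <= Rr j by rewrite -RkE rate_min_le ?inE.
have alpha_gt0 : 0 < alpha by rewrite /alpha -(hconst k) !mulr_gt0.
have cost_gt0 : 0 < (beta + gamma) / alpha by rewrite divr_gt0 // addr_gt0 ?mulr_gt0.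
have muE : mu = Rr m / Rr k by rewrite /mu /Rm /Rk RmE RkE.
have km : k != m.
  apply: contraTneq mu_gt; rewrite muE => ->; rewrite divff ?gt_eqF // -leNgt; lra.
have := mc_core_rate_bound core km kmin; rewrite /alpha_i hconst -/alpha => rate_bound.
suff : mu <= 1 + (beta + gamma) / alpha by lra.
rewrite -(ler_pM2l alpha_gt0).
have -> : alpha * mu = alpha / Rr k * Rr m.
  by rewrite muE; field; rewrite gt_eqF.
have -> : alpha * (1 + (beta + gamma) / alpha)
          = (alpha + (beta + gamma)) / Rr m * Rr m.
  by field; rewrite !gt_eqF.
by rewrite ler_pM2r.
Qed.
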